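(* Let $p>2$ be a prime and let $a,b\in\mathbb{C}_p$ with $a\neq0$, $b\neq0$, $a\neq b$, $|2a|_p=|b|_p$ and $|2a-b|_p=|a|_p$. Let $P=-\frac1b$, $D=\mathbb{C}_p\setminus\{P\}$, $f(x)=\frac{ax^2}{bx+1}$ on $D$, $x_1=0$, $x_2=\frac1{a-b}$. Then $x_1$ is an attracting fixed point and $x_2$ is an indifferent fixed point of $f$, and $$A(x_1)=B_{\frac{1}{|a|_p}}(x_1),\qquad SI(x_2)=B_{\frac1{|a-b|_p}}(x_2).$$
   Context: $\mathbb{C}_p$ is the field of complex $p$-adic numbers with $p$-adic norm $|\cdot|_p$. For $c\in\mathbb{C}_p$, $r>0$: $B_r(c)=\{x:|x-c|_p<r\}$, $S_r(c)=\{x:|x-c|_p=r\}$. For $y\in D$, $y^{(n)}=f^n(y)$ is the $n$-th iterate (defined as long as no earlier iterate equals $P$). A fixed point $x^{(0)}$ of $f$ is attracting if $|f'(x^{(0)})|_p<1$ and indifferent if $|f'(x^{(0)})|_p=1$. Its basin of attraction is $A(x^{(0)})=\{y: y^{(n)}\text{ defined for all }n,\ y^{(n)}\to x^{(0)}\}$. A ball $B_r(x^{(0)})$ contained in $D$ is a Siegel disk of $x^{(0)}$ if every sphere $S_\rho(x^{(0)})$ with $\rho<r$ is invariant, i.e. $x\in S_\rho(x^{(0)})$ implies $x^{(n)}\in S_\rho(x^{(0)})$ for all $n\ge1$; the maximal Siegel disk $SI(x^{(0)})$ is the union of all Siegel disks centered at $x^{(0)}$. *)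

From HB Require Import structures.
From mathcomp Require Import all_boot all_order all_algebra.
From mathcomp Require Import reals.
Set Implicit Arguments. Unset Strict Implicit. Unset Printing Implicit Defensive.
Import Order.TTheory GRing.Theory Num.Theory.
Local Open Scope ring_scope.

Section Cp.
Variables (R : realType) (K : closedFieldType) (nrm : K -> R).

(* Axiomatic description of (K, nrm) being C_p, the field of complex p-adic
   numbers: an algebraically closed field (K : closedFieldType) with a
   non-archimedean absolute value normalised by |p| = 1/p, complete, and in
   which the algebraic closure of Q is dense.  These properties characterise
   C_p up to isometric isomorphism. *)
Definition is_Cp (p : nat) : Prop :=
  nrm 0 = 0 /\
      (forall x : K, x != 0 -> 0 < nrm x) /\
      (forall x y : K, nrm (x * y) = nrm x * nrm y) /\
      (forall x y : K, nrm (x + y) <= Num.max (nrm x) (nrm y)) /\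
      (forall n : nat, (0 < n)%N -> (n%:R : K) != 0) /\
      nrm (p%:R) = (p%:R)^-1 /\
      (forall u : nat -> K,
          (forall eps : R, 0 < eps -> exists N : nat, forall m n : nat,
              (N <= m)%N -> (N <= n)%N -> nrm (u m - u n) < eps) ->
          exists l : K, forall eps : R, 0 < eps -> exists N : nat,
              forall n : nat, (N <= n)%N -> nrm (u n - l) < eps) /\
      (forall (x : K) (eps : R), 0 < eps -> exists y : K,
          (exists q : {poly int}, q != 0 /\ root (map_poly intr q) y) /\
          nrm (x - y) < eps).

Definition ball (c : K) (r : R) (x : K) : Prop := nrm (x - c) < r.
Definition sphere (c : K) (r : R) (x : K) : Prop := nrm (x - c) = r.

Variables (f : K -> K) (P : K).
Definition inD (x : K) : Prop := x != P.

Definition has_deriv (x d : K) : Prop :=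
  forall eps : R, 0 < eps -> exists delta : R, 0 < delta /\
    forall y : K, 0 < nrm (y - x) < delta ->
      nrm ((f y - f x) / (y - x) - d) < eps.

Definition fixed_point (x : K) : Prop := inD x /\ f x = x.

Definition attracting (x : K) : Prop :=
  fixed_point x /\ exists d, has_deriv x d /\ nrm d < 1.

Definition indifferent (x : K) : Prop :=
  fixed_point x /\ exists d, has_deriv x d /\ nrm d = 1.

(* y^(n) = iter n f y is defined for all n iff no iterate equals P *)
Definition basin (x0 y : K) : Prop :=
  (forall k : nat, iter k f y != P) /\
  (forall eps : R, 0 < eps -> exists N : nat, forall n : nat, (N <= n)%N ->
      nrm (iter n f y - x0) < eps).

Definition siegel_disk (x0 : K) (r : R) : Prop :=
  0 < r /\ (forall x, ball x0 r x -> inD x) /\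
  forall rho : R, rho < r -> forall x : K, sphere x0 rho x ->
    forall n : nat, (1 <= n)%N -> sphere x0 rho (iter n f x).

Definition SI (x0 y : K) : Prop := exists r : R, siegel_disk x0 r /\ ball x0 r y.

End Cp.

From HB Require Import structures.
From mathcomp Require Import all_boot all_order all_algebra.
From mathcomp Require Import reals.
From mathcomp Require Import ring lra.
Set Implicit Arguments. Unset Strict Implicit. Unset Printing Implicit Defensive.
Import Order.TTheory GRing.Theory Num.Theory.
Local Open Scope ring_scope.

(* Near 0 the denominator b x + 1 has norm 1, so |f x| = |a| |x|^2: the ball of
   radius 1/|a| is attracted quadratically to 0, while outside it |f x| >= |x|,
   so orbits never enter it; the pole -1/b lies on its boundary sphere.
   Around x2 one has f x - x2 = (x - x2) (a x + 1) / (b x + 1), and on the ball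
   of radius 1/|a - b| both a x + 1 = (2a - b) x2 + a (x - x2) and
   b x + 1 = a x2 + b (x - x2) have norm |a|/|a - b|, because
   |2a - b| = |b| = |a|.  Hence f preserves every sphere about x2 in that ball,
   and no larger Siegel disk exists since the pole lies at distance exactly
   1/|a - b| from x2. *)

Lemma bernoulli_ineq (R : realDomainType) (h : R) n :
  0 <= h -> 1 + n%:R * h <= (1 + h) ^+ n.
Proof.
move=> h_ge0; elim: n => [|n IHn]; first by rewrite mul0r addr0 expr0.
rewrite exprSr -natr1; apply: le_trans (ler_wpM2r _ IHn).
  by have := ler0n R n; nra.
by rewrite addr_ge0.
Qed.

Lemma exprn_lt_eventually (R : archiRealFieldType) (t eps : R) :
  0 <= t -> t < 1 -> 0 < eps -> exists N, forall n, (N <= n)%N -> t ^+ n < eps.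
Proof.
move=> t_ge0 t_lt1 eps_gt0.
have [->|t_neq0] := eqVneq t 0.
  by exists 1%N => -[|n] // _; rewrite expr0n.
have t_gt0 : 0 < t by rewrite lt_neqAle eq_sym t_neq0.
pose h := t^-1 - 1; have h_gt0 : 0 < h by rewrite subr_gt0 invf_gt1.
pose N := Num.bound (eps^-1 / h).
have N_gt : eps^-1 / h < N%:R.
  by apply: archi_boundP; rewrite ltW // divr_gt0 // invr_gt0.
have tN_lt : eps^-1 < (t ^+ N)^-1.
  rewrite -exprVn -[t^-1](subrK 1) addrC -/h.
  apply: lt_le_trans (bernoulli_ineq N (ltW h_gt0)).
  by move: N_gt; rewrite ltr_pdivrMr //; lra.
exists N => n le_Nn; apply: le_lt_trans (ler_wiXn2l t_ge0 (ltW t_lt1) le_Nn) _.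
by move: tN_lt; rewrite ltf_pV2 // posrE ?invr_gt0 // exprn_gt0.
Qed.

Record ultrametric_abs (R : realDomainType) (K : fieldType) (nrm : K -> R) :
    Prop := UltrametricAbs {
  nrm0 : nrm 0 = 0;
  nrm_gt0 : forall x, x != 0 -> 0 < nrm x;
  nrmM : forall x y, nrm (x * y) = nrm x * nrm y;
  nrmD_le_max : forall x y, nrm (x + y) <= Num.max (nrm x) (nrm y) }.

Section UltrametricAbs.
Variables (R : realFieldType) (K : fieldType) (nrm : K -> R).
Hypothesis habs : ultrametric_abs nrm.

Local Notation nrm0 := (nrm0 habs).
Local Notation nrm_gt0 := (nrm_gt0 habs).
Local Notation nrmM := (nrmM habs).
Local Notation nrmD_le_max := (nrmD_le_max habs).

Lemma nrm_ge0 x : 0 <= nrm x.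
Proof. by have [->|/nrm_gt0/ltW] := eqVneq x 0; rewrite ?nrm0. Qed.

Lemma nrm1 : nrm 1 = 1.
Proof.
have nrm1_neq0 := lt0r_neq0 (nrm_gt0 (oner_neq0 K)).
by apply: (mulfI nrm1_neq0); rewrite -nrmM !mulr1.
Qed.

Lemma nrmN x : nrm (- x) = nrm x.
Proof.
have : nrm (-1) ^+ 2 == 1 by rewrite expr2 -nrmM mulrNN mulr1 nrm1.
rewrite pexprn_eq1 ?nrm_ge0 // => /eqP nrmN1.
by rewrite -mulN1r nrmM nrmN1 mul1r.
Qed.

Lemma nrmV x : nrm x^-1 = (nrm x)^-1.
Proof.
have [->|x_neq0] := eqVneq x 0; first by rewrite invr0 nrm0 invr0.
have nrmx_neq0 := lt0r_neq0 (nrm_gt0 x_neq0).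
by apply: (mulfI nrmx_neq0); rewrite -nrmM !mulfV // nrm1.
Qed.

Lemma nrmX x n : nrm (x ^+ n) = nrm x ^+ n.
Proof. by elim: n => [|n IHn]; rewrite ?expr0 ?nrm1 // !exprS nrmM IHn. Qed.

Lemma nrmB_le_max x y : nrm (x - y) <= Num.max (nrm x) (nrm y).
Proof. by rewrite -(nrmN y); apply: nrmD_le_max. Qed.

Lemma nrmDl_small x y : nrm x < nrm y -> nrm (x + y) = nrm y.
Proof.
move=> lt_xy; apply/eqP; rewrite eq_le; apply/andP; split.
  by have := nrmD_le_max x y; rewrite (max_idPr (ltW lt_xy)).
have := nrmB_le_max (x + y) x; rewrite addrC addKr le_max => /orP[//|le_yx].
by move: lt_xy; rewrite ltNge le_yx.
Qed.

Lemma nrmDr_small x y : nrm y < nrm x -> nrm (x + y) = nrm x.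
Proof. by rewrite addrC; apply: nrmDl_small. Qed.

Lemma nrm_natr_le1 n : nrm n%:R <= 1.
Proof.
elim: n => [|n IHn]; first by rewrite mulr0n nrm0.
by rewrite -natr1 (le_trans (nrmD_le_max _ _)) // ge_max IHn nrm1 lexx.
Qed.

Lemma nrm_eq_of_double a b :
  nrm (2 * a) = nrm b -> nrm (2 * a - b) = nrm a -> nrm b = nrm a.
Proof.
move=> nrm_2a nrm_2a_b; apply/eqP; rewrite eq_le; apply/andP; split.
  by rewrite -nrm_2a nrmM ler_piMl ?nrm_ge0 ?nrm_natr_le1.
by rewrite -nrm_2a_b (le_trans (nrmB_le_max _ _)) // nrm_2a maxxx.
Qed.

End UltrametricAbs.

Section Dynamics.
Variables (R : realType) (K : closedFieldType) (nrm : K -> R).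
Hypothesis habs : ultrametric_abs nrm.

Local Notation nrm0 := (nrm0 habs).
Local Notation nrm_gt0 := (nrm_gt0 habs).
Local Notation nrmM := (nrmM habs).
Local Notation nrm_ge0 := (nrm_ge0 habs).
Local Notation nrm1 := (nrm1 habs).
Local Notation nrmN := (nrmN habs).
Local Notation nrmV := (nrmV habs).
Local Notation nrmX := (nrmX habs).
Local Notation nrmDl_small := (nrmDl_small habs).
Local Notation nrmDr_small := (nrmDr_small habs).
Local Notation nrmD_le_max := (nrmD_le_max habs).

Section GeneralMap.
Variables (f : K -> K) (P : K).

Lemma has_deriv_factor (x : K) (g : K -> K) (r M : R) : 0 < r -> 0 < M ->
    (forall y, nrm (y - x) < r -> f y - f x = (y - x) * g y) ->
    (forall y, nrm (y - x) < r -> nrm (g y - g x) <= M * nrm (y - x)) ->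
  has_deriv nrm f x (g x).
Proof.
move=> r_gt0 M_gt0 f_factor g_lipschitz eps eps_gt0.
exists (Num.min r (eps / M)); split; first by rewrite lt_min r_gt0 divr_gt0.
move=> y /andP[yx_gt0]; rewrite lt_min => /andP[yx_lt_r yx_lt_eps].
have yx_neq0 : y - x != 0 by apply: contraTneq yx_gt0 => ->; rewrite nrm0 ltxx.
rewrite f_factor // [_ * g y]mulrC mulfK //.
apply: le_lt_trans (g_lipschitz _ yx_lt_r) _.
by rewrite mulrC -ltr_pdivlMr.
Qed.

Section Basin.
Variables (x0 : K) (r : R).
Hypotheses (r_gt0 : 0 < r) (pole_outside : r <= nrm (P - x0)).
Hypothesis contract :
  forall x, nrm (x - x0) < r -> nrm (f x - x0) * r <= nrm (x - x0) ^+ 2.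
Hypothesis escape :
  forall x, r <= nrm (x - x0) -> x != P -> r <= nrm (f x - x0).

Lemma iter_dist_le y n : ball nrm x0 r y ->
  nrm (iter n f y - x0) <= nrm (y - x0) * (nrm (y - x0) / r) ^+ n.
Proof.
rewrite /ball => y_in; set d := nrm (y - x0).
have ratio_ge0 : 0 <= d / r by rewrite divr_ge0 ?nrm_ge0 ?ltW.
have ratio_le1 : d / r <= 1 by rewrite ler_pdivrMr ?mul1r ?ltW.
elim: n => [|n IHn] /=; first by rewrite expr0 mulr1.
have dn_le_d : nrm (iter n f y - x0) <= d.
  exact: le_trans IHn (ler_piMr (nrm_ge0 _) (exprn_ile1 _ ratio_ge0 ratio_le1)).
rewrite exprSr !mulrA ler_pdivlMr //.
apply: le_trans (contract (le_lt_trans dn_le_d y_in)) _.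
by rewrite expr2 ler_pM ?nrm_ge0.
Qed.

Lemma ball_sub_basin y : ball nrm x0 r y -> basin nrm f P x0 y.
Proof.
move=> y_in; have := y_in; rewrite /ball; set d := nrm (y - x0) => d_lt_r.
have ratio_ge0 : 0 <= d / r by rewrite divr_ge0 ?nrm_ge0 ?ltW.
have ratio_lt1 : d / r < 1 by rewrite ltr_pdivrMr ?mul1r.
have iter_in n : nrm (iter n f y - x0) < r.
  apply: le_lt_trans (iter_dist_le n y_in) (le_lt_trans _ d_lt_r).
  exact: ler_piMr (nrm_ge0 _) (exprn_ile1 _ ratio_ge0 (ltW ratio_lt1)).
split=> [k|eps eps_gt0].
  by apply: contraTneq (iter_in k) => ->; rewrite -leNgt pole_outside.
have [N ratioN_small] :=
  exprn_lt_eventually ratio_ge0 ratio_lt1 (divr_gt0 eps_gt0 r_gt0).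
exists N => n /ratioN_small ratio_n_small.
apply: le_lt_trans (iter_dist_le n y_in) _.
apply: le_lt_trans (ler_wpM2r (exprn_ge0 n ratio_ge0) (ltW d_lt_r)) _.
by rewrite -ltr_pdivlMl // [_ * eps]mulrC.
Qed.

Lemma basin_iff_ball y : basin nrm f P x0 y <-> ball nrm x0 r y.
Proof.
split=> [[iter_neq_pole iter_cvg]|]; last exact: ball_sub_basin.
rewrite /ball ltNge; apply/negP => y_out.
have iter_out n : r <= nrm (iter n f y - x0).
  by elim: n => [//|n IHn] /=; apply: escape.
have [N iterN_near] := iter_cvg r r_gt0.
by have := iterN_near N (leqnn N); rewrite ltNge iter_out.
Qed.

End Basin.

Section Siegel.
Variables (x0 : K) (r : R).
Hypotheses (r_gt0 : 0 < r) (pole_dist : nrm (P - x0) = r).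
Hypothesis isometry :
  forall x, ball nrm x0 r x -> nrm (f x - x0) = nrm (x - x0).

Lemma siegel_disk_ball : siegel_disk nrm f P x0 r.
Proof.
split=> //; split=> [x x_in|rho rho_lt_r x x_rho n _].
  by apply: contraTneq x_in => ->; rewrite /ball pole_dist ltxx.
elim: n => [//|n IHn] /=.
by rewrite /sphere isometry // /ball IHn.
Qed.

Lemma SI_iff_ball y : SI nrm f P x0 y <-> ball nrm x0 r y.
Proof.
split=> [[s [[_ [s_avoids_pole _]] y_in]]|y_in]; last first.
  by exists r; split; first exact: siegel_disk_ball.
rewrite /ball ltNge; apply/negP => r_le.
suff : inD P P by rewrite /inD eqxx.
by apply: s_avoids_pole; rewrite /ball pole_dist (le_lt_trans r_le y_in).
Qed.

End Siegel.

End GeneralMap.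

Section QuadraticMap.
Variables a b : K.
Hypotheses (a_neq0 : a != 0) (b_neq0 : b != 0) (a_neq_b : a != b).
Hypotheses (nrm_b : nrm b = nrm a) (nrm_2a_b : nrm (2 * a - b) = nrm a).

Definition qmap x := a * x ^+ 2 / (b * x + 1).

Local Notation P := (- b^-1).
Local Notation x2 := ((a - b)^-1).
Local Notation A := (nrm a).
Local Notation C := (nrm (a - b)).

Let amb_neq0 : a - b != 0. Proof. by rewrite subr_eq0. Qed.
Let A_gt0 : 0 < A. Proof. exact: nrm_gt0. Qed.
Let C_gt0 : 0 < C. Proof. exact: nrm_gt0. Qed.

Lemma nrm_pole : nrm P = A^-1.
Proof. by rewrite nrmN nrmV nrm_b. Qed.

Lemma denom_neq0 x : x != P -> b * x + 1 != 0.
Proof.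
have -> : b * x + 1 = b * (x - P) by rewrite opprK mulrDr mulfV.
by move=> x_neq_pole; rewrite mulf_neq0 // subr_eq0.
Qed.

Lemma nrm_denom_small x : nrm x < A^-1 -> nrm (b * x + 1) = 1.
Proof.
move=> x_small; rewrite nrmDl_small nrm1 // nrmM nrm_b.
by rewrite -(mulfV (lt0r_neq0 A_gt0)) ltr_pM2l.
Qed.

Lemma nrm_qmap_small x : nrm x < A^-1 -> nrm (qmap x) = A * nrm x ^+ 2.
Proof.
move=> x_small.
by rewrite /qmap nrmM nrmV nrmM nrmX nrm_denom_small // invr1 mulr1.
Qed.

Lemma nrm_qmap_large x : A^-1 <= nrm x -> x != P -> nrm x <= nrm (qmap x).
Proof.
move=> x_large x_neq_pole.
have Ax_ge1 : 1 <= A * nrm x.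
  by rewrite -(mulfV (lt0r_neq0 A_gt0)) ler_pM2l.
have denom_gt0 := nrm_gt0 (denom_neq0 x_neq_pole).
have denom_le : nrm (b * x + 1) <= A * nrm x.
  by have := nrmD_le_max (b * x) 1; rewrite nrmM nrm_b nrm1 (max_idPl Ax_ge1).
rewrite /qmap nrmM nrmV nrmM nrmX ler_pdivlMr //.
have := nrm_ge0 x; nra.
Qed.

Lemma qmap_basin0 y : basin nrm qmap P 0 y <-> ball nrm 0 A^-1 y.
Proof.
apply: basin_iff_ball => [||x|x]; rewrite ?invr_gt0 ?subr0 ?nrm_pole //.
  by move=> x_small; rewrite nrm_qmap_small // mulrAC mulfV ?mul1r ?lt0r_neq0.
by move=> x_large /(nrm_qmap_large x_large); apply: le_trans.
Qed.

Lemma qmap_attracting : attracting nrm qmap P 0.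
Proof.
split.
  split; last by rewrite /qmap expr0n mulr0 mul0r.
  by rewrite /inD eq_sym oppr_eq0 invr_eq0.
exists (a * 0 / (b * 0 + 1)); split; last by rewrite mulr0 mul0r nrm0 ltr01.
apply: (has_deriv_factor (g := fun y => a * y / (b * y + 1))
  (r := A^-1) (M := A)); rewrite ?invr_gt0 // => y; rewrite subr0 => y_small.
  rewrite /qmap expr0n mulr0 !mul0r subr0; field.
  by apply: denom_neq0; apply: contraTneq y_small => ->; rewrite nrm_pole ltxx.
by rewrite mulr0 mul0r subr0 !nrmM nrmV nrm_denom_small // invr1 mulr1.
Qed.

Lemma nrm_pole_sub_x2 : nrm (P - x2) = C^-1.
Proof.
have -> : P - x2 = - (a / (b * (a - b))) by field; rewrite amb_neq0 b_neq0.
rewrite nrmN nrmM nrmV nrmM nrm_b invfM mulrA mulfV ?mul1r //.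
exact: lt0r_neq0.
Qed.

Lemma neq_pole_near_x2 x : nrm (x - x2) < C^-1 -> x != P.
Proof. by apply: contraTneq => ->; rewrite nrm_pole_sub_x2 ltxx. Qed.

Lemma nrm_affine_near_x2 c e x : nrm c = A -> nrm e = A ->
  nrm (x - x2) < C^-1 -> nrm (c * x2 + e * (x - x2)) = A / C.
Proof.
move=> nrm_c nrm_e x_near; rewrite nrmDr_small !nrmM nrmV nrm_c //.
by rewrite nrm_e ltr_pM2l.
Qed.

Lemma nrm_numer_near_x2 x : nrm (x - x2) < C^-1 -> nrm (a * x + 1) = A / C.
Proof.
have -> : a * x + 1 = (2 * a - b) * x2 + a * (x - x2) by field.
exact: nrm_affine_near_x2.
Qed.

Lemma nrm_denom_near_x2 x : nrm (x - x2) < C^-1 -> nrm (b * x + 1) = A / C.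
Proof.
have -> : b * x + 1 = a * x2 + b * (x - x2) by field.
exact: nrm_affine_near_x2.
Qed.

Lemma qmap_sub_x2 x : x != P ->
  qmap x - x2 = (x - x2) * ((a * x + 1) / (b * x + 1)).
Proof.
by move/denom_neq0 => denom_x_neq0; rewrite /qmap; field; rewrite denom_x_neq0.
Qed.

Lemma nrm_multiplier_near_x2 x : nrm (x - x2) < C^-1 ->
  nrm ((a * x + 1) / (b * x + 1)) = 1.
Proof.
move=> x_near; rewrite nrmM nrmV nrm_numer_near_x2 // nrm_denom_near_x2 //.
by rewrite divff // mulf_neq0 ?invr_eq0 ?lt0r_neq0.
Qed.

Let x2_near_x2 : nrm (x2 - x2) < C^-1.
Proof. by rewrite subrr nrm0 invr_gt0. Qed.

Lemma qmap_x2 : qmap x2 = x2.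
Proof.
apply/eqP; rewrite -subr_eq0 qmap_sub_x2 ?subrr ?mul0r //.
exact: neq_pole_near_x2 x2_near_x2.
Qed.

Lemma qmap_indifferent : indifferent nrm qmap P x2.
Proof.
split; first by split; [exact: neq_pole_near_x2 x2_near_x2 | exact: qmap_x2].
exists ((a * x2 + 1) / (b * x2 + 1)).
split; last exact: nrm_multiplier_near_x2 x2_near_x2.
pose M := C / (A / C) ^+ 2.
apply: (has_deriv_factor (g := fun y => (a * y + 1) / (b * y + 1))
  (r := C^-1) (M := M)) => [||y y_near|y y_near].
- by rewrite invr_gt0.
- by rewrite /M divr_gt0 ?exprn_gt0 ?divr_gt0.
- by rewrite qmap_x2 qmap_sub_x2 // neq_pole_near_x2.
have denom_y := denom_neq0 (neq_pole_near_x2 y_near).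
have -> : (a * y + 1) / (b * y + 1) - (a * x2 + 1) / (b * x2 + 1)
    = (a - b) * (y - x2) / ((b * y + 1) * (b * x2 + 1)).
  by field; rewrite amb_neq0 denom_y addrCA subrr addr0 a_neq0.
rewrite !nrmM nrmV nrmM nrm_denom_near_x2 // nrm_denom_near_x2 ?x2_near_x2 //.
by rewrite /M expr2 mulrAC.
Qed.

Lemma qmap_SI y : SI nrm qmap P x2 y <-> ball nrm x2 C^-1 y.
Proof.
apply: SI_iff_ball; rewrite ?invr_gt0 ?nrm_pole_sub_x2 // => x x_near.
by rewrite qmap_sub_x2 ?neq_pole_near_x2 // nrmM nrm_multiplier_near_x2 ?mulr1.
Qed.

End QuadraticMap.

End Dynamics.

Theorem theorem3p7 (p : nat) (R : realType) (K : closedFieldType) (nrm : K -> R)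
    (a b : K) :
  prime p -> (2 < p)%N -> is_Cp nrm p ->
  a != 0 -> b != 0 -> a != b ->
  nrm (2 * a) = nrm b -> nrm (2 * a - b) = nrm a ->
  let P := - b^-1 in
  let f := fun x : K => a * x ^+ 2 / (b * x + 1) in
  let x1 := 0 in
  let x2 := (a - b)^-1 in
  attracting nrm f P x1 /\ indifferent nrm f P x2 /\
  (forall y : K, basin nrm f P x1 y <-> ball nrm x1 (nrm a)^-1 y) /\
  (forall y : K, SI nrm f P x2 y <-> ball nrm x2 (nrm (a - b))^-1 y).
Proof.
(* Only the ultrametric absolute value is used: neither [p] nor the
   completeness and density clauses of [is_Cp] play a role. *)
move=> _ _ [nrm0 [nrm_gt0 [nrmM [nrmD_le_max _]]]] a_neq0 b_neq0 a_neq_b.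
move=> nrm_2a nrm_2a_b P f x1 x2.
have habs : ultrametric_abs nrm by split.
have nrm_b := nrm_eq_of_double habs nrm_2a nrm_2a_b.
split; first exact: qmap_attracting.
split; first exact: qmap_indifferent.
by split=> y; [exact: qmap_basin0 | exact: qmap_SI].
Qed.
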